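(* Let $p,q$ be positive integers, with notation as in the context. Let $T_c$ be a positive integer with $T_c=2^{l_c}T_1$ for a non-negative integer $l_c$ (or $T_c=1$), and let $s$ be the integer with $T_{e_s}=2^sT_1$. Suppose the positive integer $e$ satisfies $$e\ge\begin{cases}\max(e_p,e_q) & \text{if } T_c=1;\\ e_{s,g}+1 & \text{if } l_c=0,\ T_1\ne 1;\\ e_{s,g}+2l_c-1 & \text{if } 1\le l_c\le s+1;\\ e_{s,g}+s+1+l_c & \text{if } l_c\ge s+2.\end{cases}$$ Then $N_{T_c,e}=N_{T_c,e+l}$ for every positive integer $l$.
   Context: Let $\mathbf{C}=\begin{bmatrix}1 & p\\ q & 1+pq\end{bmatrix}$. The Cat map over $\mathbb{Z}_{2^e}$ is the bijection $v\mapsto \mathbf{C}v\bmod 2^e$ of $\mathbb{Z}_{2^e}^2$; a cycle of length $n$ is an orbit of a point $v$ for which $n$ is the least positive integer with $\mathbf{C}^n v\equiv v\pmod{2^e}$. $N_{T_c,e}$ denotes the number of cycles of length $T_c$ of the Cat map over $\mathbb{Z}_{2^e}$, and $T_e$ its least period (least $n\ge1$ with $\mathbf{C}^n\equiv I\pmod{2^e}$). Put $A=pq+2$, $B=\sqrt{A^2-4}$, $G_n=\left(\frac{A+B}{2}\right)^n+\left(\frac{A-B}{2}\right)^n$, $H_n=\frac{1}{B}\left(\left(\frac{A+B}{2}\right)^n-\left(\frac{A-B}{2}\right)^n\right)$ (integers). For a nonzero integer $m$ let $v_2(m)$ be the largest $x$ with $2^x\mid m$. Let $e_p=v_2(p)$,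 $e_q=v_2(q)$; $T_1=3$ if $p,q$ are both odd, $T_1=2$ if exactly one of $p,q$ is odd, $T_1=1$ if both are even; $\hat h=-1$ if $e_p+e_q=0$ and $\hat h=\min(e_p,e_q)$ otherwise; $e_{s,h}=v_2(H_{T_1})$; $m_0=1$ if $\frac12 G_{T_1}\not\equiv 1\pmod 4$ and $m_0=0$ otherwise; $e_{s,g}=v_2\left(\frac12 G_{2^{m_0}T_1}-1\right)$; $x_0=e_{s,h}+m_0+\hat h-e_{s,g}$ if $e_{s,g}<e_{s,h}+m_0+\hat h$ and $x_0=0$ otherwise; and $e_s=e_{s,h}+m_0+\hat h+x_0$. The cases in the displayed condition are read in order (the first applicable one is used). *)

From HB Require Import structures.
From mathcomp Require Import all_boot all_order all_algebra.
Unset Printing Implicit Defensive.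
Import Order.TTheory GRing.Theory Num.Theory.
Local Open Scope ring_scope.

Definition Cmat (p q : nat) : 'M[int]_2 :=
  \matrix_(i < 2, j < 2)
    if val i == 0%N then (if val j == 0%N then 1 else p%:Z)
    else (if val j == 0%N then q%:Z else 1 + (p * q)%N%:Z).

(* C reduced modulo 2^e, as a matrix over Z_{2^e} (used for e >= 1). *)
Definition Cmod (p q e : nat) : 'M['Z_(2 ^ e)]_2 :=
  map_mx (fun z : int => z%:~R) (Cmat p q).

Definition pt_period (p q e : nat) (v : 'cV['Z_(2 ^ e)]_2) (n : nat) : bool :=
  [&& (0 < n)%N, (Cmod p q e ^+ n) *m v == v &
      [forall m : 'I_n, (0 < m)%N ==> ((Cmod p q e ^+ m) *m v != v)]].

Definition cat_orbit (p q e : nat) (v : 'cV['Z_(2 ^ e)]_2) : {set 'cV['Z_(2 ^ e)]_2} :=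
  [set x | fconnect (fun w => Cmod p q e *m w) v x].

Definition Ncycles (p q n e : nat) : nat :=
  #|[set cat_orbit p q e v | v in [pred v : 'cV['Z_(2 ^ e)]_2 | pt_period p q e v n]]|.

Definition mx_eqmod (e : nat) (M N : 'M[int]_2) : bool :=
  [forall i, forall j, (M i j == N i j %[mod (2 ^ e)%N%:Z])%Z].

Definition mx_least_period (p q e n : nat) : bool :=
  [&& (0 < n)%N, mx_eqmod e (Cmat p q ^+ n) 1 &
      [forall m : 'I_n, (0 < m)%N ==> ~~ mx_eqmod e (Cmat p q ^+ m) 1]].

Definition Aval (p q : nat) : int := (p * q)%N%:Z + 2.

(* G_n = alpha^n + beta^n, H_n = (alpha^n - beta^n)/B, where alpha, beta are the
   roots of X^2 - A X + 1; both satisfy X_{n+2} = A X_{n+1} - X_n. *)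
Fixpoint Gseq (A : int) (n : nat) : int :=
  match n with
  | 0%N => 2
  | 1%N => A
  | S ((S m) as k) => A * Gseq A k - Gseq A m
  end.

Fixpoint Hseq (A : int) (n : nat) : int :=
  match n with
  | 0%N => 0
  | 1%N => 1
  | S ((S m) as k) => A * Hseq A k - Hseq A m
  end.

Definition Gn (p q n : nat) : int := Gseq (Aval p q) n.
Definition Hn (p q n : nat) : int := Hseq (Aval p q) n.

Definition v2 (m : int) : nat := logn 2 `|m|%N.

Definition T1 (p q : nat) : nat :=
  if odd p && odd q then 3%N else if odd p || odd q then 2%N else 1%N.

Definition ep (p : nat) : nat := logn 2 p.

Definition hath (p q : nat) : int :=
  if (ep p + ep q == 0)%N then -1 else (minn (ep p) (ep q))%:Z.

Definition esh (p q : nat) : nat := v2 (Hn p q (T1 p q)).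

Definition m0 (p q : nat) : nat :=
  if (((Gn p q (T1 p q)) %/ 2)%Z %% 4)%Z != 1 then 1%N else 0%N.

Definition esg (p q : nat) : nat :=
  v2 (((Gn p q (2 ^ m0 p q * T1 p q)) %/ 2)%Z - 1).

Definition Xsum (p q : nat) : int := (esh p q)%:Z + (m0 p q)%:Z + hath p q.

Definition x0 (p q : nat) : int :=
  if (esg p q)%:Z < Xsum p q then Xsum p q - (esg p q)%:Z else 0.

Definition es (p q : nat) : int := Xsum p q + x0 p q.

(* Multiplying by 2^l maps Z_(2^e)^2 injectively into Z_(2^(e+l))^2, commutes with C and
   preserves least periods, so it maps the cycles of length Tc at level e injectively to
   cycles at level e + l; it is onto them as soon as every u with C^Tc u = u (mod 2^(e+l))
   is divisible by 2^l.  This holds whenever C^Tc = 1 + 2^a Y with det Y = 2^j * odd and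
   a + j <= e, since multiplying (C^Tc - 1) u = 0 by adj Y gives 2^(a+j) * odd * u = 0.
   For Tc = 1 one takes a = min(e_p, e_q), so a + j = max(e_p, e_q).  Otherwise
   C^T1 = 1 (mod 2), and since det C = 1, squaring 1 + 2^a Y gives 1 + 2^(a+1) Y' with
   v2 (det Y') = v2 (det Y) provided a + j >= 2; the trace identity G_n = 2 - 4^a det Y
   relates j to e_{s,g} and yields a + j <= e_{s,g} + l_c. *)

From HB Require Import structures.
From mathcomp Require Import all_boot all_order all_algebra.
From mathcomp Require Import ring zify.
Import Order.TTheory GRing.Theory Num.Theory.
Local Open Scope ring_scope.

(** * Scaling points of Z_(2^e)^k by 2^l *)

Lemma intrZp_eq0 (m : nat) (z : int) : (1 < m)%N ->
  ((z%:~R : 'Z_m) == 0) = (m%:Z %| z)%Z.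
Proof.
move=> m_gt1; have natrZp_eq0 n : ((n%:R : 'Z_m) == 0) = (m %| n)%N.
  by rewrite -val_eqE /= val_Zp_nat.
by case: z => n; rewrite ?NegzE ?mulrNz ?oppr_eq0 -pmulrn natrZp_eq0.
Qed.

Lemma intrZp_eq (m : nat) (z1 z2 : int) : (1 < m)%N ->
  ((z1%:~R : 'Z_m) == z2%:~R) = (m%:Z %| z1 - z2)%Z.
Proof. by move=> m_gt1; rewrite -subr_eq0 -intrB intrZp_eq0. Qed.

Definition Zp_rep (m : nat) (x : 'Z_m) : int := (x : nat)%:Z.

Lemma Zp_repK (m : nat) : cancel (@Zp_rep m) intr.
Proof. by move=> x; rewrite /Zp_rep -pmulrn natr_Zp. Qed.

Lemma map_Zp_repK {m r c : nat} (A : 'M['Z_m]_(r, c)) :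
  map_mx intr (map_mx (@Zp_rep m) A) = A.
Proof. by apply/matrixP => i j; rewrite !mxE Zp_repK. Qed.

Lemma exp2_gt1 (e : nat) : (0 < e)%N -> (1 < 2 ^ e)%N.
Proof. by move=> e_gt0; rewrite -[1%N](expn0 2) ltn_exp2l. Qed.

Section ScaleUp.

Variables (e l k : nat).
(* For [e = 0], ['Z_(2 ^ e)] is ['Z_2], not the trivial ring. *)
Hypothesis e_gt0 : (0 < e)%N.

Definition scale_up (v : 'cV['Z_(2 ^ e)]_k) : 'cV['Z_(2 ^ (e + l))]_k :=
  map_mx intr ((2 ^ l)%N%:Z *: map_mx (@Zp_rep _) v).

Let cast_eq_mod (E : nat) (z1 z2 : int) : (0 < E)%N ->
  ((z1%:~R : 'Z_(2 ^ E)) == z2%:~R) = ((2 ^ E)%N%:Z %| z1 - z2)%Z.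
Proof. by move=> E_gt0; rewrite intrZp_eq // exp2_gt1. Qed.

Lemma scale_up_eq (z1 z2 : int) :
  (((2 ^ l)%N%:Z * z1)%:~R == ((2 ^ l)%N%:Z * z2)%:~R :> 'Z_(2 ^ (e + l)))
  = (z1%:~R == z2%:~R :> 'Z_(2 ^ e)).
Proof.
rewrite !cast_eq_mod ?addn_gt0 ?e_gt0 // -mulrBr expnD PoszM mulrC.
by rewrite dvdz_mul2r // eqz_nat expn_eq0.
Qed.

Lemma scale_up_intr (w : 'cV[int]_k) :
  scale_up (map_mx intr w) = map_mx intr ((2 ^ l)%N%:Z *: w).
Proof.
by apply/matrixP => i j; apply/eqP; rewrite !mxE scale_up_eq Zp_repK.
Qed.

Lemma scale_up_inj : injective scale_up.
Proof.
move=> v w /matrixP vw; apply/matrixP => i j; have /eqP := vw i j.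
by rewrite !mxE scale_up_eq !Zp_repK => /eqP.
Qed.

Lemma mulmx_scale_up (M : 'M[int]_k) (v : 'cV['Z_(2 ^ e)]_k) :
  map_mx intr M *m scale_up v = scale_up (map_mx intr M *m v).
Proof.
have -> : map_mx intr M *m v = map_mx intr (M *m map_mx (@Zp_rep _) v).
  by rewrite map_mxM map_Zp_repK.
by rewrite scale_up_intr /scale_up -map_mxM scalemxAr.
Qed.

End ScaleUp.

Arguments scale_up e l {k} v.

Lemma iter_mulmx (R : pzRingType) (k : nat) (A : 'M[R]_k.+1) (v : 'cV[R]_k.+1) n :
  iter n (fun w => A *m w) v = A ^+ n *m v.
Proof. by elim: n => [|n IHn] /=; rewrite ?mul1mx // IHn exprS mulmxA. Qed.

Lemma Cmod_exp (p q e n : nat) : Cmod p q e ^+ n = map_mx intr (Cmat p q ^+ n).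
Proof. by rewrite /Cmod rmorphXn. Qed.

Section CatScaleUp.

Variables (p q e l : nat).
Hypothesis e_gt0 : (0 < e)%N.

Local Notation up := (@scale_up e l 2).

Lemma Cmod_exp_scale_up n v :
  Cmod p q (e + l) ^+ n *m up v = up (Cmod p q e ^+ n *m v).
Proof. by rewrite !Cmod_exp mulmx_scale_up. Qed.

Lemma pt_period_scale_up v n : pt_period p q (e + l) (up v) n = pt_period p q e v n.
Proof.
rewrite /pt_period Cmod_exp_scale_up (inj_eq (scale_up_inj _ _ _ e_gt0)).
congr [&& _, _ & _]; apply: eq_forallb => m.
by rewrite Cmod_exp_scale_up (inj_eq (scale_up_inj _ _ _ e_gt0)).
Qed.

Lemma cat_orbit_scale_up v :
  cat_orbit p q (e + l) (up v) = up @: cat_orbit p q e v.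
Proof.
have iter_up n : iter n (fun w => Cmod p q (e + l) *m w) (up v)
                 = up (iter n (fun w => Cmod p q e *m w) v).
  by rewrite !iter_mulmx Cmod_exp_scale_up.
apply/setP => x; rewrite inE; apply/idP/imsetP.
- move/iter_findex => <-; rewrite iter_up.
  by eexists; last reflexivity; rewrite inE fconnect_iter.
- case=> y; rewrite inE => /iter_findex <- ->.
  by rewrite -iter_up fconnect_iter.
Qed.

Lemma Ncycles_scale_up Tc :
  (forall u, pt_period p q (e + l) u Tc -> exists v, u = up v) ->
  Ncycles p q Tc e = Ncycles p q Tc (e + l).
Proof.
move=> up_onto; rewrite /Ncycles; set orbits_e := [set cat_orbit p q e v | v in _].
have -> : [set cat_orbit p q (e + l) u | u in [pred u | pt_period p q (e + l) u Tc]]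
          = (fun S : {set _} => up @: S) @: orbits_e.
  apply/setP => X; apply/imsetP/imsetP.
  - case=> u; rewrite inE => Pu ->; have [v def_u] := up_onto u Pu; subst u.
    exists (cat_orbit p q e v); last exact: cat_orbit_scale_up.
    by apply: imset_f; rewrite inE -pt_period_scale_up.
  - case=> Y /imsetP [v Pv ->] ->; rewrite inE in Pv.
    by exists (up v); rewrite ?inE ?pt_period_scale_up ?cat_orbit_scale_up.
by rewrite (card_imset orbits_e (imset_inj (scale_up_inj _ _ _ e_gt0))).
Qed.

End CatScaleUp.

(** * 2-adic valuations and the kernel of X - 1 *)

Lemma v2M (x y : int) : x != 0 -> y != 0 -> v2 (x * y) = (v2 x + v2 y)%N.
Proof. by move=> x0 y0; rewrite /v2 abszM lognM // absz_gt0. Qed.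

Lemma v2N (x : int) : v2 (- x) = v2 x.
Proof. by rewrite /v2 abszN. Qed.

Lemma v2_exp2 (k : nat) : v2 (2 ^ k)%N%:Z = k.
Proof. by rewrite /v2 absz_nat pfactorK. Qed.

Lemma dvdz_exp2_v2 (k : nat) (x : int) : x != 0 ->
  ((2 ^ k)%N%:Z %| x)%Z = (k <= v2 x)%N.
Proof. by move=> x0; rewrite dvdzE absz_nat pfactor_dvdn // absz_gt0. Qed.

Lemma dvdz_exp2_cancel (E l : nat) (d x : int) : d != 0 -> (v2 d + l <= E)%N ->
  ((2 ^ E)%N%:Z %| d * x)%Z -> ((2 ^ l)%N%:Z %| x)%Z.
Proof.
move=> d0 le_E; rewrite !dvdzE !absz_nat abszM => /(dvdn_trans (dvdn_exp2l 2 le_E)).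
have d_gt0 : (0 < `|d|)%N by rewrite absz_gt0.
have [m m_odd ->] := pfactor_coprime (isT : prime 2) d_gt0.
rewrite /v2 expnD [(m * _)%N]mulnC -mulnA dvdn_pmul2l ?expn_gt0 //.
by rewrite Gauss_dvdr // coprimeXl.
Qed.

Lemma dvdz_mulmx {r c : nat} {d : int} (M : 'M[int]_(r, c)) (w : 'cV[int]_c) :
  (forall i, (d %| w i ord0)%Z) -> forall i, (d %| (M *m w) i ord0)%Z.
Proof. by move=> dvd_w i; rewrite mxE; apply: rpred_sum => j _; apply: dvdz_mull. Qed.

Lemma scalemx_divz {r c : nat} {d : int} {A : 'M[int]_(r, c)} :
  (forall i j, (d %| A i j)%Z) -> A = d *: map_mx (fun z => (z %/ d)%Z) A.
Proof. by move=> dvd_A; apply/matrixP => i j; rewrite !mxE mulrC divzK. Qed.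

Definition mx_2adic {k : nat} (a j : nat) (X : 'M[int]_k) : Prop :=
  exists Y : 'M[int]_k, [/\ X = 1%:M + (2 ^ a)%N%:Z *: Y, \det Y != 0 & v2 (\det Y) = j].

Lemma mx_2adic_kernel {k a j E l : nat} {X : 'M[int]_k} {u : 'cV[int]_k} :
  mx_2adic a j X -> (a + j + l <= E)%N ->
  (forall i, ((2 ^ E)%N%:Z %| ((X - 1%:M) *m u) i ord0)%Z) ->
  forall i, ((2 ^ l)%N%:Z %| u i ord0)%Z.
Proof.
case=> Y [-> detY0 <-] le_E; rewrite addrC addKr => dvd_Xu i.
have adjYX : \adj Y *m ((2 ^ a)%N%:Z *: Y) = ((2 ^ a)%N%:Z * \det Y)%:M.
  by rewrite -scalemxAr mul_adj_mx scale_scalar_mx.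
have := dvdz_mulmx (\adj Y) _ dvd_Xu i.
rewrite mulmxA adjYX mul_scalar_mx mxE; apply: dvdz_exp2_cancel.
- by rewrite mulf_neq0 // eqz_nat expn_eq0.
- by rewrite v2M ?eqz_nat ?expn_eq0 // v2_exp2.
Qed.

Lemma fixed_point_scale_up (k a j e l : nat) (X : 'M[int]_k)
    (u : 'cV['Z_(2 ^ (e + l))]_k) :
  (0 < e)%N -> mx_2adic a j X -> (a + j <= e)%N -> map_mx intr X *m u = u ->
  exists v, u = scale_up e l v.
Proof.
move=> e_gt0 X2adic le_e fix_u; set x := map_mx (@Zp_rep _) u.
have Xx0 : map_mx intr ((X - 1%:M) *m x) = 0 :> 'cV['Z_(2 ^ (e + l))]_k.
  by rewrite map_mxM map_mxB map_mx1 map_Zp_repK mulmxBl fix_u mul1mx subrr.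
have dvd_Xx i : ((2 ^ (e + l))%N%:Z %| ((X - 1%:M) *m x) i ord0)%Z.
  have /matrixP/(_ i ord0)/eqP := Xx0; rewrite [t in t == _]mxE [t in _ == t]mxE.
  by rewrite intrZp_eq0 // exp2_gt1 // addn_gt0 e_gt0.
have dvd_x := mx_2adic_kernel X2adic (leq_add le_e (leqnn l)) dvd_Xx.
exists (map_mx intr (map_mx (fun z => (z %/ (2 ^ l)%N%:Z)%Z) x)).
rewrite scale_up_intr // -scalemx_divz ?map_Zp_repK // => i c.
by rewrite (ord1 c).
Qed.

Section Mx2.

Variable R : comPzRingType.
Implicit Types (A B Y : 'M[R]_2) (c : R).

Lemma mx2P A B :
  A 0 0 = B 0 0 -> A 0 1 = B 0 1 -> A 1 0 = B 1 0 -> A 1 1 = B 1 1 -> A = B.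
Proof.
have ord2E (i : 'I_2) : i = 0 \/ i = 1.
  by case: i => [[|[|//]] ?]; [left | right]; apply: val_inj.
move=> e00 e01 e10 e11; apply/matrixP => i j.
by case: (ord2E i) => ->; case: (ord2E j) => ->.
Qed.

Let lift0_ord2 : lift ord0 (ord0 : 'I_1) = 1 :> 'I_2. Proof. exact: val_inj. Qed.

Lemma det_mx2 A : \det A = A 0 0 * A 1 1 - A 0 1 * A 1 0.
Proof.
rewrite (expand_det_row _ 0) !big_ord_recl big_ord0 addr0 /cofactor !det_mx11 !mxE /=.
rewrite expr0 expr1 mul1r mulN1r mulrN.
by congr (A _ _ * A _ _ - A _ _ * A _ _); apply: val_inj.
Qed.

Lemma tr_mx2 A : \tr A = A 0 0 + A 1 1.
Proof. by rewrite /mxtrace big_ord_recl big_ord1 lift0_ord2. Qed.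

Lemma mulmx2E A B i j : (A *m B) i j = A i 0 * B 0 j + A i 1 * B 1 j.
Proof. by rewrite mxE big_ord_recl big_ord1 lift0_ord2. Qed.

Lemma det_1_scale c Y : \det (1 + c *: Y) = 1 + c * \tr Y + c ^+ 2 * \det Y.
Proof. by rewrite !det_mx2 tr_mx2 !mxE /=; ring. Qed.

Lemma mx2_Cayley_Hamilton A : A ^+ 2 = \tr A *: A - (\det A)%:M.
Proof. by apply: mx2P; rewrite expr2 mulmx2E det_mx2 tr_mx2 !mxE /=; ring. Qed.

Lemma tr_1_scale c Y : \det (1 + c *: Y) = 1 -> \tr (1 + c *: Y) = 2 - c ^+ 2 * \det Y.
Proof.
rewrite det_1_scale mxtraceD mxtraceZ mxtrace1 => detE.
transitivity (2 - c ^+ 2 * \det Y + (1 + c * \tr Y + c ^+ 2 * \det Y - 1)); first ring.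
by rewrite detE subrr addr0.
Qed.

Lemma sqr_1_scale c Y :
  (1 + (2 * c) *: Y) ^+ 2 = 1 + (4 * c) *: (Y *m (1 + c *: Y)).
Proof.
apply: mx2P; rewrite expr2 !mulmx2E !mxE !big_ord_recl big_ord0 lift0_ord2 !mxE /=; ring.
Qed.

End Mx2.

Lemma det_exp (R : comPzRingType) (n k : nat) (A : 'M[R]_n.+1) :
  \det (A ^+ k) = \det A ^+ k.
Proof. by elim: k => [|k IHk]; rewrite ?det1 // !exprS det_mulmx IHk. Qed.

Lemma v2_odd {z : int} : ~~ (2 %| z)%Z -> z != 0 /\ v2 z = 0%N.
Proof.
move=> z_odd; have z0 : z != 0 by apply: contraNneq z_odd => ->.
split=> //; apply/eqP; rewrite -leqn0 leqNgt -(dvdz_exp2_v2 1 _ z0).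
by rewrite expn1.
Qed.

Lemma mx_2adic_sqr (a j : nat) (X : 'M[int]_2) : \det X = 1 -> (0 < a)%N ->
  (2 <= a + j)%N -> mx_2adic a j X -> mx_2adic a.+1 j (X ^+ 2).
Proof.
move=> detX a_gt0 aj_ge2 [Y [defX detY0 vY]].
set c : int := (2 ^ a.-1)%N%:Z.
have c0 : c != 0 by rewrite eqz_nat expn_eq0.
have c2 : (2 ^ a)%N%:Z = 2 * c by rewrite /c -PoszM -expnS prednK.
have c4 : (2 ^ a.+1)%N%:Z = 4 * c by rewrite expnS PoszM c2; ring.
(* [det X = 1] forces [tr Y = -2c det Y], hence [det (1 + c Y) = 1 - c^2 det Y] is odd. *)
have trY : c * \tr Y = - (2 * c ^+ 2 * \det Y).
  have : 1 + 2 * (c * \tr Y + 2 * c ^+ 2 * \det Y) = 1 + 0.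
    by rewrite addr0 -[RHS]detX defX c2 det_1_scale; ring.
  by move/addrI/eqP; rewrite mulf_eq0 /= addr_eq0 => /eqP.
have cD_even : (2 %| c ^+ 2 * \det Y)%Z.
  have := dvdz_exp2_v2 1 _ (mulf_neq0 (expf_neq0 2 c0) detY0); rewrite expn1 => ->.
  by rewrite v2M ?expf_neq0 // expr2 v2M // /c v2_exp2 vY; lia.
have odd_1cD : ~~ (2 %| 1 - c ^+ 2 * \det Y)%Z by rewrite rpredBr.
have [cD1_0 v2_cD1] := v2_odd odd_1cD.
have detY' : \det (Y *m (1 + c *: Y)) = \det Y * (1 - c ^+ 2 * \det Y).
  by rewrite det_mulmx det_1_scale trY; ring.
exists (Y *m (1 + c *: Y)); rewrite detY'; split.
- by rewrite defX c2 c4 sqr_1_scale.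
- exact: mulf_neq0.
- by rewrite v2M // v2_cD1 addn0.
Qed.

Lemma mx_2adic_exp2 (a j i : nat) (X : 'M[int]_2) : \det X = 1 -> (0 < a)%N ->
  (2 <= a + j)%N -> mx_2adic a j X -> mx_2adic (a + i) j (X ^+ (2 ^ i)).
Proof.
move=> detX a_gt0 aj_ge2 X2adic; elim: i => [|i IHi]; first by rewrite addn0 expr1.
rewrite addnS expnSr exprM; apply: mx_2adic_sqr => //.
- by rewrite det_exp detX expr1n.
- by rewrite ltn_addr.
- lia.
Qed.

Lemma v2_half_tr_2adic (a : nat) (X Y : 'M[int]_2) : (0 < a)%N -> \det X = 1 ->
  X = 1 + (2 ^ a)%N%:Z *: Y -> \tr X != 2 ->
  \det Y != 0 /\ v2 ((\tr X %/ 2)%Z - 1) = (2 * a - 1 + v2 (\det Y))%N.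
Proof.
move=> a_gt0 detX defX; rewrite defX tr_1_scale -?defX //.
have -> : (2 ^ a)%N%:Z ^+ 2 = (2 ^ (2 * a - 1))%N%:Z * 2.
  by rewrite expr2 -!PoszM -expnD -expnSr; congr (Posz (2 ^ _)); lia.
have -> : 2 - (2 ^ (2 * a - 1))%N%:Z * 2 * \det Y = (1 - (2 ^ (2 * a - 1))%N%:Z * \det Y) * 2.
  by ring.
move=> tr_ne2; have detY0 : \det Y != 0.
  by apply: contraNneq tr_ne2 => ->; rewrite mulr0 subr0 mul1r.
split=> //; rewrite mulzK // addrAC subrr add0r v2N v2M ?v2_exp2 //.
by rewrite eqz_nat expn_eq0.
Qed.

(** * Powers of the Cat matrix *)

Lemma Gseq_increasing (A : int) (n : nat) : 3 <= A -> 2 <= Gseq A n < Gseq A n.+1.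
Proof.
move=> A_ge3; elim: n => [|n /andP[G_ge2 G_lt]]; first by rewrite /=; lia.
have -> : Gseq A n.+2 = A * Gseq A n.+1 - Gseq A n by [].
have : 3 * Gseq A n.+1 <= A * Gseq A n.+1 by apply: ler_wpM2r; lia.
lia.
Qed.

Section CatMatrix.

Variables p q : nat.
Local Notation C := (Cmat p q).
Local Notation A := (Aval p q).

Lemma det_Cmat : \det C = 1.
Proof. by rewrite det_mx2 !mxE /= PoszM; ring. Qed.

Lemma tr_Cmat : \tr C = A.
Proof. by rewrite tr_mx2 !mxE /= /Aval; ring. Qed.

Lemma Cmat_sqr : C ^+ 2 = A *: C - 1.
Proof. by rewrite mx2_Cayley_Hamilton det_Cmat tr_Cmat. Qed.

Lemma Cmat_expSS (n : nat) : C ^+ n.+2 = A *: C ^+ n.+1 - C ^+ n.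
Proof. by rewrite !exprSr -mulrA -expr2 Cmat_sqr mulrBr mulr1 -scalerAr -exprSr. Qed.

Lemma det_Cmat_exp (n : nat) : \det (C ^+ n) = 1.
Proof. by rewrite det_exp det_Cmat expr1n. Qed.

Lemma tr_Cmat_exp (n : nat) : \tr (C ^+ n) = Gn p q n.
Proof.
suff: \tr (C ^+ n) = Gn p q n /\ \tr (C ^+ n.+1) = Gn p q n.+1 by case.
elim: n => [|n [IHn IHn1]]; first by rewrite expr0 expr1 mxtrace1 tr_Cmat.
by split=> //; rewrite Cmat_expSS mxtraceD -scaleN1r !mxtraceZ IHn IHn1 mulN1r.
Qed.

Lemma tr_Cmat_exp_neq2 (n : nat) : (0 < p)%N -> (0 < q)%N -> (0 < n)%N ->
  \tr (C ^+ n) != 2.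
Proof.
move=> p_gt0 q_gt0; case: n => // n _; rewrite tr_Cmat_exp /Gn.
have pq_gt0 : (0 < p * q)%N by rewrite muln_gt0 p_gt0.
have A_ge3 : 3 <= A by rewrite /Aval; lia.
by have := Gseq_increasing _ n A_ge3; lia.
Qed.

End CatMatrix.

Section CatTwoAdic.

Variables p q : nat.
Hypotheses (p_gt0 : (0 < p)%N) (q_gt0 : (0 < q)%N).
Local Notation C := (Cmat p q).
Local Notation A := (Aval p q).

Lemma dvdz_Cmat_sub1 (d : int) : (d %| p%:Z)%Z -> (d %| q%:Z)%Z ->
  forall i j, (d %| (C - 1) i j)%Z.
Proof.
move=> dvd_p dvd_q i j; rewrite !mxE.
case: i => [[|[|//]] ?]; case: j => [[|[|//]] ?] /=; rewrite ?subrr ?subr0 ?dvdz0 //.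
by rewrite addrC addKr PoszM dvdz_mulr.
Qed.

Lemma Cmat_2adic :
  mx_2adic (minn (ep p) (ep q)) (maxn (ep p) (ep q) - minn (ep p) (ep q)) C.
Proof.
set a := minn _ _.
have dvd_exp2 k : (0 < k)%N -> (a <= ep k)%N -> ((2 ^ a)%N%:Z %| k%:Z)%Z.
  by move=> k_gt0; rewrite dvdz_exp2_v2 // eqz_nat -lt0n.
have := scalemx_divz (dvdz_Cmat_sub1 _ (dvd_exp2 p p_gt0 (geq_minl _ _))
                                     (dvd_exp2 q q_gt0 (geq_minr _ _))).
set Y := map_mx _ _ => defC; exists Y.
have detY : (2 ^ a)%N%:Z ^+ 2 * \det Y = - (p * q)%N%:Z.
  by rewrite -detZ -defC det_mx2 !mxE /= PoszM; ring.
have exp2a0 : (2 ^ a)%N%:Z != 0 by rewrite eqz_nat expn_eq0.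
have detY0 : \det Y != 0.
  apply/eqP => Y0; move: detY; rewrite Y0 mulr0 => /esym/eqP.
  by rewrite oppr_eq0 eqz_nat muln_eq0 -!leqn0 leqNgt p_gt0 leqNgt q_gt0.
split=> //; first by rewrite -defC addrC subrK.
have := congr1 v2 detY; rewrite v2N expr2 !v2M ?mulf_neq0 // v2_exp2.
rewrite PoszM v2M ?eqz_nat -?lt0n //; rewrite /v2 !absz_nat -/(ep p) -/(ep q) /a.
lia.
Qed.

Lemma Cmat_exp_T1 : exists Y, C ^+ T1 p q = 1 + 2 *: Y.
Proof.
suff dvd2 i j : (2 %| (C ^+ T1 p q - 1) i j)%Z.
  exists (map_mx (fun z => (z %/ 2)%Z) (C ^+ T1 p q - 1)).
  by rewrite -(scalemx_divz dvd2) addrC subrK.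
have dvd2_pq k : (2 %| (p * q + k)%N%:Z)%Z = ~~ (odd p && odd q (+) odd k).
  by rewrite dvdzE absz_nat dvdn2 oddD oddM.
rewrite /T1; case: ifPn => [both_odd | not_both_odd].
  have -> : C ^+ 3 - 1 = (A + 1) *: ((A - 1) *: C - 1).
    by apply: mx2P; rewrite Cmat_expSS Cmat_sqr !mxE /=; ring.
  rewrite mxE dvdz_mulr // (_ : A + 1 = (p * q + 3)%N%:Z) ?dvd2_pq ?both_odd //.
  by rewrite /Aval PoszD; ring.
case: ifPn => [_ | none_odd].
  have -> : C ^+ 2 - 1 = A *: C - 2 *: 1.
    by apply: mx2P; rewrite Cmat_sqr !mxE /=; ring.
  by rewrite !mxE rpredB ?dvdz_mulr // [A]/Aval -PoszD dvd2_pq addbF.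
rewrite expr1; move: none_odd; rewrite negb_or => /andP[p_even q_even].
by apply: dvdz_Cmat_sub1; rewrite dvdzE absz_nat dvdn2.
Qed.

Lemma v2_Gn_2adic {n a : nat} {Y : 'M[int]_2} : (0 < n)%N -> (0 < a)%N ->
  C ^+ n = 1 + (2 ^ a)%N%:Z *: Y ->
  \det Y != 0 /\ v2 ((Gn p q n %/ 2)%Z - 1) = (2 * a - 1 + v2 (\det Y))%N.
Proof.
move=> n_gt0 a_gt0 defX; rewrite -tr_Cmat_exp.
by apply: v2_half_tr_2adic; rewrite ?det_Cmat_exp ?tr_Cmat_exp_neq2.
Qed.

Lemma m0_T1 {Y : 'M[int]_2} : C ^+ T1 p q = 1 + 2 *: Y ->
  m0 p q = (if (2 %| \det Y)%Z then 0 else 1)%N.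
Proof.
move=> defX; rewrite /m0.
have := @tr_1_scale _ 2 Y; rewrite -defX det_Cmat_exp tr_Cmat_exp => /(_ erefl) ->.
have -> : 2 - 2 ^+ 2 * \det Y = (1 - 2 * \det Y) * 2 by ring.
have mod4E (x : int) : ((x %% 4)%Z == 1) = (4 %| x - 1)%Z by rewrite -eqz_mod_dvd.
rewrite mulzK // mod4E addrAC subrr add0r rpredN (_ : 4 = 2 * 2) // dvdz_mul2l //.
by rewrite if_neg.
Qed.

Lemma Cmat_exp_2adic (lc : nat) : exists a j,
  (a + j <= esg p q + lc)%N /\ mx_2adic a j (C ^+ (2 ^ lc * T1 p q)).
Proof.
have T1_gt0 : (0 < T1 p q)%N by rewrite /T1; case: ifP => //; case: ifP.
have [Y1 defX1] := Cmat_exp_T1.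
have [detY1 v2G1] := v2_Gn_2adic T1_gt0 (isT : 0 < 1)%N defX1.
have m0E := m0_T1 defX1.
(* If [det Y1] is odd ([m0 = 1]), [a + j = 1] is too small to double, so doubling
   starts from [C ^+ (2 * T1)]. *)
case: ifPn m0E => [detY1_even | detY1_odd] m0E.
  have esgE : esg p q = (1 + v2 (\det Y1))%N by rewrite /esg m0E mul1n v2G1.
  exists (1 + lc)%N, (v2 (\det Y1)); split; first by rewrite esgE addnAC.
  rewrite mulnC exprM; apply: mx_2adic_exp2; rewrite ?det_Cmat_exp //.
    by rewrite add1n ltnS -(dvdz_exp2_v2 1 _ detY1) expn1.
  by exists Y1.
have defX2 : C ^+ (2 * T1 p q) = 1 + (2 ^ 2)%N%:Z *: (Y1 *m (1 + Y1)).
  have := @sqr_1_scale _ 1 Y1; rewrite !mulr1 scale1r => sqrE.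
  by rewrite mulnC exprM defX1 sqrE.
have T2_gt0 : (0 < 2 * T1 p q)%N by rewrite muln_gt0.
have [detY2 v2G2] := v2_Gn_2adic T2_gt0 (isT : 0 < 2)%N defX2.
have esgE : esg p q = (3 + v2 (\det (Y1 *m (1 + Y1))))%N.
  by rewrite /esg m0E expn1 v2G2.
case: lc => [|lc].
  exists 1%N, 0%N; rewrite esgE; split=> //.
  by exists Y1; rewrite mul1n (v2_odd detY1_odd).2.
exists (2 + lc)%N, (v2 (\det (Y1 *m (1 + Y1)))); split; first by rewrite esgE; lia.
rewrite expnS mulnAC exprM; apply: mx_2adic_exp2; rewrite ?det_Cmat_exp //.
by exists (Y1 *m (1 + Y1)).
Qed.

End CatTwoAdic.

Theorem theorem4 (p q : nat) (hp : (0 < p)%N) (hq : (0 < q)%N)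
    (Tc lc s : nat) (hTc : (0 < Tc)%N)
    (hTcform : Tc = (2 ^ lc * T1 p q)%N \/ Tc = 1%N)
    (hs : mx_least_period p q `|es p q|%N (2 ^ s * T1 p q))
    (e : nat) (he : (0 < e)%N)
    (hbound : ((if Tc == 1%N then maxn (ep p) (ep q)
                else if lc == 0%N then esg p q + 1
                else if lc <= s + 1 then esg p q + 2 * lc - 1
                else esg p q + s + 1 + lc) <= e)%N) :
  forall l : nat, (0 < l)%N -> Ncycles p q Tc e = Ncycles p q Tc (e + l).
Proof.
move=> l _; apply: Ncycles_scale_up => // u /and3P[_ /eqP fix_u _].
have [a [j [le_aj C2adic]]] :
    exists a j : nat, (a + j <= e)%N /\ mx_2adic a j (Cmat p q ^+ Tc).
  case: (eqVneq Tc 1%N) hbound => [-> | Tc_neq1] bound.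
    exists (minn (ep p) (ep q)), (maxn (ep p) (ep q) - minn (ep p) (ep q))%N.
    by rewrite expr1; split; [lia | exact: Cmat_2adic].
  have le_esg : (esg p q + lc <= e)%N.
    by move: bound; case: (posnP lc) => [-> | lc_gt0] /=; [|case: ifP]; lia.
  have {hTcform} -> : Tc = (2 ^ lc * T1 p q)%N.
    by case: hTcform Tc_neq1 => // ->; rewrite eqxx.
  have [a [j [le_aj C2adic]]] := Cmat_exp_2adic _ _ hp hq lc.
  by exists a, j; split=> //; apply: leq_trans le_esg.
by rewrite Cmod_exp in fix_u; apply: fixed_point_scale_up C2adic le_aj fix_u.
Qed.
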